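(* Let $n\ge4$ be a power of $2$. Then $\mathcal{B}^{(n)}\subseteq\mathcal{M}^{(b,n)}$ for every integer $b\in(1,n)$ dividing $n$. When $n\ge512$ the inclusion is strict.
   Context: Matrices over $\mathbb{F}\in\{\mathbb{R},\mathbb{C}\}$. For $d$ dividing $n$: $\mathcal{B}\mathcal{D}^{(d,n)}$ is the class of $n\times n$ block-diagonal matrices with $n/d$ arbitrary diagonal blocks of size $d\times d$; $\mathcal{D}\mathcal{B}^{(d,n)}$ is the class of $n\times n$ matrices which, partitioned into an $(n/d)\times(n/d)$ grid of $d\times d$ blocks, have every block diagonal. The Monarch class $\mathcal{M}^{(b,n)}$ is the set of products $\mathbf{L}\mathbf{R}$ with $\mathbf{L}\in\mathcal{D}\mathcal{B}^{(b,n)}$ and $\mathbf{R}\in\mathcal{B}\mathcal{D}^{(b,n)}$. For $k\in\{2,4,\dots,n\}$ a power of 2, a butterfly factor matrix in $\mathcal{B}\mathcal{F}^{(n,k)}$ is an $n\times n$ block-diagonal matrix with $n/k$ diagonal blocks, each a $k\times k$ butterfly factor $\begin{bmatrix}\mathbf{D}_1&\mathbf{D}_2\\\mathbf{D}_3&\mathbf{D}_4\end{bmatrix}$ with $\mathbf{D}_1,\dots,\mathbf{D}_4$ arbitrary $(k/2)\times(k/2)$ diagonal matrices. The butterfly class $\mathcal{B}^{(n)}$ consists of all products $\mathbf{B}_n\mathbf{B}_{n/2}\cdots\mathbf{B}_2$ with $\mathbf{B}_k\in\mathcal{B}\mathcal{F}^{(n,k)}$. *)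

From mathcomp Require Import all_boot all_algebra.
From mathcomp Require Import reals complex.
Set Implicit Arguments. Unset Strict Implicit. Unset Printing Implicit Defensive.
Import GRing.Theory Num.Theory.
Local Open Scope ring_scope.

Section Classes.
Variable F : fieldType.

Definition is_BD (d n : nat) (A : 'M[F]_n) : Prop :=
  forall i j : 'I_n, (i %/ d)%N <> (j %/ d)%N -> A i j = 0.

(* DB^(d,n): n/d x n/d grid of d x d blocks, each block diagonal:
   entry (i,j) is in block (i/d, j/d) at position (i mod d, j mod d). *)
Definition is_DB (d n : nat) (A : 'M[F]_n) : Prop :=
  forall i j : 'I_n, (i %% d)%N <> (j %% d)%N -> A i j = 0.

Definition is_monarch (b n : nat) (A : 'M[F]_n) : Prop :=
  exists L R : 'M[F]_n, [/\ is_DB b L, is_BD b R & A = L *m R].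

(* k x k butterfly factor [D1 D2; D3 D4] with D1..D4 diagonal (k/2)x(k/2):
   entry (i,j) can be nonzero only if i mod (k/2) = j mod (k/2). *)
Definition is_butterfly_factor (k : nat) (A : 'M[F]_k) : Prop :=
  forall i j : 'I_k, (i %% k./2)%N <> (j %% k./2)%N -> A i j = 0.

Lemma blk_lt (n k l i : nat) : (i < k)%N -> (l * k + k <= n)%N -> (l * k + i < n)%N.
Proof. by move=> hi hk; apply: leq_trans hk; rewrite ltn_add2l. Qed.

Definition is_BF (n k : nat) (A : 'M[F]_n) : Prop :=
  (forall i j : 'I_n, (i %/ k)%N <> (j %/ k)%N -> A i j = 0) /\
  (forall (l : nat), (l < n %/ k)%N ->
     forall (Hk : (l * k + k <= n)%N),
     is_butterfly_factor
       (\matrix_(i < k, j < k)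
          A (@Ordinal n (l * k + i) (blk_lt (ltn_ord i) Hk))
            (@Ordinal n (l * k + j) (blk_lt (ltn_ord j) Hk)))).

(* list [n; n/2; ...; 2] of sizes, for n = 2^m *)
Definition butterfly_sizes (n : nat) : seq nat :=
  [seq (2 ^ j)%N | j <- rev (iota 1 (trunc_log 2 n))].

Definition mprod_seq (n : nat) (B : nat -> 'M[F]_n) (ks : seq nat) : 'M[F]_n :=
  foldr (fun k M => B k *m M) 1%:M ks.

Definition is_butterfly (n : nat) (A : 'M[F]_n) : Prop :=
  exists B : nat -> 'M[F]_n,
    (forall k, k \in butterfly_sizes n -> is_BF k (B k)) /\
    A = mprod_seq B (butterfly_sizes n).

Definition thmC15_over : Prop :=
  forall (n m : nat), n = (2 ^ m)%N -> (4 <= n)%N ->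
    (forall b : nat, (1 < b < n)%N -> (b %| n)%N ->
       forall A : 'M[F]_n, is_butterfly A -> is_monarch b A) /\
    ((512 <= n)%N ->
     forall b : nat, (1 < b < n)%N -> (b %| n)%N ->
       exists A : 'M[F]_n, is_monarch b A /\ ~ is_butterfly A).

End Classes.

From mathcomp Require Import all_boot all_algebra.
From mathcomp Require Import reals complex.
From mathcomp Require Import ring.
Set Implicit Arguments. Unset Strict Implicit. Unset Printing Implicit Defensive.
Import GRing.Theory Num.Theory.
Local Open Scope ring_scope.

(* A butterfly factor of size k = 2^j is block-diagonal with blocks of size k,
   hence lies in BD^(b) when k | b; its blocks are butterfly factors, hence it
   lies in DB^(b) when b | k/2.  Both classes are closed under products, so
   splitting B_n ... B_2 at k = b writes a butterfly matrix as (DB)(BD).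
   Conversely, entry (i, j) of a p-Monarch product L R is the single summand
   L i a * R a j with a = i mod p inside the p-block of j, so the 2x2 minors
   on rows congruent mod p and columns in one p-block vanish.  Butterflies are
   p-Monarch for every power p of 2, so a b-Monarch matrix 1 + E_uv with such a
   nonzero minor for p = 2 or p = 4 is not a butterfly. *)

Section SupportPatterns.
Variables (F : fieldType) (n : nat).
Implicit Types (f : nat -> nat) (A X Y : 'M[F]_n).

Definition fdiag f A : Prop := forall i j : 'I_n, f i <> f j -> A i j = 0.

Lemma fdiag1 f : fdiag f 1%:M.
Proof. by move=> i j fij; rewrite mxE; case: eqP => // eij; case: fij; rewrite eij. Qed.

Lemma fdiagD f X Y : fdiag f X -> fdiag f Y -> fdiag f (X + Y).
Proof. by move=> fX fY i j fij; rewrite mxE fX ?fY ?addr0. Qed.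

Lemma fdiag_delta f (u v : 'I_n) : f u = f v -> fdiag f (delta_mx u v).
Proof.
move=> fuv i j fij; rewrite mxE.
have [eiu | _] := eqVneq i u; have [ejv | _] := eqVneq j v => //.
by case: fij; rewrite eiu ejv.
Qed.

Lemma fdiag_mul f X Y : fdiag f X -> fdiag f Y -> fdiag f (X *m Y).
Proof.
move=> fX fY i j fij; rewrite mxE big1 // => k _.
have [fik | fik] := eqVneq (f i) (f k); last by rewrite fX ?mul0r //; apply/eqP.
by rewrite fY ?mulr0 // -fik.
Qed.

End SupportPatterns.

Section MonarchMinors.
Variables (F : fieldType) (p n : nat).
Implicit Types (A L R : 'M[F]_n).

Lemma DB_monarch A : is_DB p A -> is_monarch p A.
Proof. by exists A, 1%:M; split; [| exact: (@fdiag1 _ _ (divn^~ p)) | rewrite mulmx1]. Qed.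

Lemma BD_monarch A : is_BD p A -> is_monarch p A.
Proof. by exists 1%:M, A; split; [exact: (@fdiag1 _ _ (modn^~ p)) | | rewrite mul1mx]. Qed.

Lemma DB_BD_summand_eq0 L R (i j a : 'I_n) : is_DB p L -> is_BD p R ->
  (a : nat) != (j %/ p * p + i %% p)%N -> L i a * R a j = 0.
Proof.
move=> hL hR; apply: contraNeq => /eqP nz; apply/eqP.
have [ia | ia] := eqVneq (i %% p)%N (a %% p)%N; last by case: nz; rewrite hL ?mul0r //; apply/eqP.
have [aj | aj] := eqVneq (a %/ p)%N (j %/ p)%N; last by case: nz; rewrite hR ?mulr0 //; apply/eqP.
by rewrite {1}(divn_eq a p) aj ia.
Qed.

Lemma DB_BD_mxE L R (i j a : 'I_n) : is_DB p L -> is_BD p R ->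
  (a : nat) = (j %/ p * p + i %% p)%N -> (L *m R) i j = L i a * R a j.
Proof.
move=> hL hR ea; rewrite mxE (bigD1 a) //= big1 ?addr0 // => c ca.
by apply: DB_BD_summand_eq0; rewrite // -ea val_eqE.
Qed.

Lemma DB_BD_mxE0 L R (i j : 'I_n) : is_DB p L -> is_BD p R ->
  (n <= j %/ p * p + i %% p)%N -> (L *m R) i j = 0.
Proof.
move=> hL hR hn; rewrite mxE big1 // => c _.
by apply: DB_BD_summand_eq0; rewrite // neq_ltn (leq_trans (ltn_ord c) hn).
Qed.

Lemma monarch_minor A (i i' j j' : 'I_n) : is_monarch p A ->
  (i %% p = i' %% p)%N -> (j %/ p = j' %/ p)%N ->
  A i j * A i' j' = A i j' * A i' j.
Proof.
move=> [L [R [hL hR ->]]] ii' jj'.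
have [ltkn | lekn] := ltnP (j %/ p * p + i %% p)%N n; last first.
  by rewrite !(DB_BD_mxE0 hL hR) ?mul0r // -?ii' -?jj'.
pose a := Ordinal ltkn.
by rewrite !(DB_BD_mxE hL hR (a := a)) -?ii' -?jj' //; ring.
Qed.

End MonarchMinors.

Section ButterflyFactors.
Variables (F : fieldType) (n : nat).
Implicit Types X : 'M[F]_n.

Lemma BF_BD k d X : (k %| d)%N -> is_BF k X -> is_BD d X.
Proof.
move=> /dvdnP[c ->] [hblk _] i j ij; apply: hblk => eij.
by apply: ij; rewrite mulnC !divnMA eij.
Qed.

Lemma BF_DB h d X : (0 < h)%N -> (h.*2 %| n)%N -> (d %| h)%N -> is_BF h.*2 X -> is_DB d X.
Proof.
move=> h0 hn dh [hblk hfac] i j ij.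
have [eij | nij] := eqVneq (i %/ h.*2)%N (j %/ h.*2)%N; last by apply: hblk; apply/eqP.
have k0 : (0 < h.*2)%N by rewrite double_gt0.
set l := (i %/ h.*2)%N.
have hl : (l < n %/ h.*2)%N by rewrite ltn_divLR // divnK.
have Hk : (l * h.*2 + h.*2 <= n)%N by rewrite -mulSnr -(divnK hn) leq_mul2r hl orbT.
have := hfac l hl Hk (Ordinal (ltn_pmod i k0)) (Ordinal (ltn_pmod j k0)).
have hk : (h %| h.*2)%N by rewrite -mul2n dvdn_mull.
rewrite mxE /= doubleK !(modn_dvdm _ hk).
have ij' : (i %% h)%N <> (j %% h)%N.
  by move=> e; apply: ij; rewrite -(modn_dvdm i dh) e modn_dvdm.
move=> /(_ ij') <-; congr (X _ _); apply: val_inj => /=.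
  by rewrite /l -divn_eq.
by rewrite /l eij -divn_eq.
Qed.

End ButterflyFactors.

Lemma butterfly_sizes_split m s : (s <= m)%N ->
  butterfly_sizes (2 ^ m) =
  [seq (2 ^ j)%N | j <- rev (iota s.+1 (m - s))] ++ [seq (2 ^ j)%N | j <- rev (iota 1 s)].
Proof.
move=> sm; rewrite /butterfly_sizes trunc_expnK // -map_cat -rev_cat.
by rewrite -{1}(subnKC sm) iotaD add1n.
Qed.

Section ButterflyProducts.
Variables (F : fieldType) (n : nat).
Implicit Types (X Y : 'M[F]_n) (B : nat -> 'M[F]_n).

Lemma mprod_seq_closed (P : 'M[F]_n -> Prop) B ks :
  P 1%:M -> (forall X Y, P X -> P Y -> P (X *m Y)) ->
  (forall k, k \in ks -> P (B k)) -> P (mprod_seq B ks).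
Proof.
move=> P1 PM; elim: ks => [|k ks IH] //= Pks.
apply: PM; first by apply: Pks; rewrite mem_head.
by apply: IH => k' k'ks; apply: Pks; rewrite inE k'ks orbT.
Qed.

Lemma mprod_seq_cat B s1 s2 : mprod_seq B (s1 ++ s2) = mprod_seq B s1 *m mprod_seq B s2.
Proof. by elim: s1 => [|k s1 IH] /=; rewrite ?mul1mx // IH mulmxA. Qed.

End ButterflyProducts.

Lemma butterfly_monarch (F : fieldType) m s (A : 'M[F]_(2 ^ m)) :
  (s <= m)%N -> is_butterfly A -> is_monarch (2 ^ s) A.
Proof.
move=> sm [B [hB ->]].
have hBF j : (0 < j <= m)%N -> is_BF (2 ^ j) (B (2 ^ j)%N).
  move=> hj; apply: hB; rewrite (butterfly_sizes_split (leq0n m)) subn0 cats0.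
  by rewrite map_f // mem_rev mem_iota add1n ltnS.
rewrite (butterfly_sizes_split sm) mprod_seq_cat.
eexists; eexists; split; last reflexivity.
- apply: mprod_seq_closed; [exact: (@fdiag1 _ _ (modn^~ _)) | exact: (@fdiag_mul _ _ (modn^~ _)) |].
  move=> k /mapP[[|j] + ->]; rewrite mem_rev mem_iota // addSn subnKC // !ltnS => /andP[sj jm].
  have := hBF j.+1; rewrite jm expnS mul2n => /(_ isT).
  apply: BF_DB; rewrite ?expn_gt0 ?dvdn_exp2l //.
  by rewrite -mul2n -expnS dvdn_exp2l.
- apply: mprod_seq_closed; [exact: (@fdiag1 _ _ (divn^~ _)) | exact: (@fdiag_mul _ _ (divn^~ _)) |].
  move=> k /mapP[j + ->]; rewrite mem_rev mem_iota add1n ltnS => /andP[j0 js].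
  apply: (BF_BD (k := 2 ^ j)); first by rewrite dvdn_exp2l.
  by apply: hBF; rewrite j0 (leq_trans js sm).
Qed.

Lemma one_delta_not_monarch (F : fieldType) p n (u v : 'I_n) :
  (0 < u)%N -> (p %| u)%N -> (0 < v < p)%N ->
  ~ is_monarch p (1%:M + delta_mx u v : 'M[F]_n).
Proof.
move=> u0 pu /andP[v0 vp] /monarch_minor.
pose o := Ordinal (ltn_trans u0 (ltn_ord u)).
move=> /(_ o u o v); rewrite mod0n (eqP pu) div0n divn_small // => /(_ erefl erefl).
have ou : (o == u) = false by rewrite -val_eqE /= ltn_eqF.
have ov : (o == v) = false by rewrite -val_eqE /= ltn_eqF.
have uv : (u == v) = false by rewrite -val_eqE /= gtn_eqF // (leq_trans vp (dvdn_leq u0 pu)).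
rewrite !mxE !eqxx ou ov uv eq_sym ou /= !(addr0, add0r, mulr0, mul1r) => /eqP.
by rewrite oner_eq0.
Qed.

Lemma monarch_not_butterfly (F : fieldType) m s : (3 <= m)%N -> (0 < s)%N ->
  exists A : 'M[F]_(2 ^ m), is_monarch (2 ^ s) A /\ ~ is_butterfly A.
Proof.
move=> m3 s0.
have lt4m : (4 < 2 ^ m)%N by rewrite (leq_trans _ (_ : 2 ^ 3 <= 2 ^ m)%N) // leq_exp2l.
have lt2m := ltn_trans (isT : 2 < 4)%N lt4m.
have lt1m := ltn_trans (isT : 1 < 2)%N lt2m.
have [s1 | s1] := ltnP 1 s.
- pose u := Ordinal lt2m; pose v := Ordinal lt1m.
  exists (1%:M + delta_mx u v); split.
    apply: BD_monarch; apply: (@fdiagD _ _ (divn^~ _)); first exact: fdiag1.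
    have lt2s : (2 ^ 1 < 2 ^ s)%N by rewrite ltn_exp2l.
    by apply: fdiag_delta; rewrite /= !divn_small // (ltn_trans _ lt2s).
  by move/(butterfly_monarch (s := 1) (ltnW (ltnW m3))); apply: one_delta_not_monarch.
- pose u := Ordinal lt4m; pose v := Ordinal lt2m.
  exists (1%:M + delta_mx u v); split.
    apply: DB_monarch; apply: (@fdiagD _ _ (modn^~ _)); first exact: fdiag1.
    by apply: fdiag_delta; rewrite (_ : s = 1%N) //; apply/eqP; rewrite eqn_leq s1.
  by move/(butterfly_monarch (s := 2) (ltnW m3)); apply: one_delta_not_monarch.
Qed.

Lemma thmC15_over_field (F : fieldType) : thmC15_over F.
Proof.
have pow2_mono := ltn_exp2l _ _ (isT : (1 < 2)%N).
move=> n m -> _; split=> [b _ | lem b /andP[b1 _]] /(@dvdn_pfactor 2 _ _ isT)[s sm eb];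
  subst b; first by move=> A; apply: butterfly_monarch.
apply: monarch_not_butterfly; first by rewrite -pow2_mono (leq_trans _ lem).
by rewrite -pow2_mono expn0 b1.
Qed.

Local Open Scope complex_scope.

Theorem theoremC15 (R : realType) :
  thmC15_over R /\ thmC15_over R[i].
Proof. by split; apply: thmC15_over_field. Qed.
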